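(* Let $k$ be a field and let $d,m$ be integers with $d$ even, $d\ge 4$ and $d<m-1$. Set $a=(d+2)/2$, $R=k[x_1,\dots,x_m,z]$, $I=(I_{a,1,m-1},I_{a,2,m})$ and $J=(I_{a-1,2,m-1},\, z\,I_{a-2,3,m-2})$, ideals of $R$ with $I\subset J$. (a) For all $v\in I_{a-1,2,m-1}$ and $w\in I_{a-2,3,m-2}$ we have $x_1x_m v w=0$ in $R/I$. (b) Let $b\in J$ be an element whose image in $R/I$ is $R/I$-regular, and write its image as $b=b_1+z b_2$ with $b_1$ in the ideal of $R/I$ generated by $I_{a-1,2,m-1}$ and $b_2$ in the ideal of $R/I$ generated by $I_{a-2,3,m-2}$. Let $s_0=b_2x_1x_m/b\in K(R/I)$, where $K(R/I)$ is the total quotient ring of $R/I$. Then $s_0 z w = w x_1x_m$ in $K(R/I)$ for all $w\in I_{a-2,3,m-2}$.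
   Context: For positive integers $a,p,q$ with $p<q$ and $2a\le q-p+2$, $I_{a,p,q}$ denotes the ideal (of any polynomial ring containing $x_p,\dots,x_q$) generated by all monomials $x_{t_1}\cdots x_{t_a}$ with $p\le t_1$, $t_a\le q$ and $t_j+2\le t_{j+1}$ for $1\le j\le a-1$. The total quotient ring of a ring is its localization at the multiplicative set of non-zero-divisors. *)

From HB Require Import structures.
From mathcomp Require Import all_boot all_algebra.
From mathcomp Require Import mpoly.
Set Implicit Arguments. Unset Strict Implicit. Unset Printing Implicit Defensive.
Import GRing.Theory.
Local Open Scope ring_scope.

(* R = k[x_1,...,x_m,z] is modelled as {mpoly k[m.+1]}:
   variable index 0 is z, variable index i (1 <= i <= m) is x_i. *)

Definition xv (k : fieldType) (m : nat) (i : nat) : {mpoly k[m.+1]} :=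
  'X_(inord i).
Definition zv (k : fieldType) (m : nat) : {mpoly k[m.+1]} := 'X_(inord 0).

Definition Igens (k : fieldType) (m a p q : nat) : {mpoly k[m.+1]} -> Prop :=
  fun g => exists t : seq nat,
    [/\ size t = a, sorted (fun i j => i.+2 <= j)%N t,
        all (fun i => p <= i <= q)%N t & g = \prod_(i <- t) xv k m i].

Definition ideal_gen (R : comRingType) (G : R -> Prop) : R -> Prop :=
  fun f => exists s : seq (R * R),
    (forall pr, pr \in s -> G pr.2) /\ f = \sum_(pr <- s) pr.1 * pr.2.

Definition genU (R : comRingType) (G1 G2 : R -> Prop) : R -> Prop :=
  fun g => G1 g \/ G2 g.
Definition genM (R : comRingType) (c : R) (G : R -> Prop) : R -> Prop :=
  fun g => exists h, G h /\ g = c * h.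

(* Working in R/I via representatives in R, with I given as a predicate:
   r is a non-zero-divisor of R/I. *)
Definition regular_mod (R : comRingType) (I : R -> Prop) (r : R) : Prop :=
  forall y, I (r * y) -> I y.

(* Equality of fractions a/s = c/t in the total quotient ring K(R/I)
   (s, t regular mod I): there is a non-zero-divisor u of R/I with
   u (a t - c s) = 0 in R/I. *)
Definition frac_eq (R : comRingType) (I : R -> Prop) (a s c t : R) : Prop :=
  exists u, regular_mod I u /\ I (u * (a * t - c * s)).

(* For generators g of I_{a-1,2,m-1} and h of
   I_{a-2,3,m-2}, put P = 1, s_1, ..., s_{a-2}, m (the indices of h framed by
   1 and m) and T = t_1, ..., t_{a-1} (the indices of g).  Walking along both
   sequences, either p_{j-1} + 2 <= t_j, and p_0..p_{j-1}, t_j..t_{a-1} is a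
   2-separated sequence of length a in [1, m-1], or t_j + 2 <= p_j, and
   t_1..t_j, p_j..p_{a-1} is one in [2, m].  If neither ever happens the two
   sequences interlace with unit steps, forcing m = 2a - 1 < m.  So x_1 x_m g h
   is a multiple of a generator of I.  Part (b) reduces to (a): modulo I,
   b2 x_1 x_m z w - w x_1 x_m b is congruent to -x_1 x_m w b1. *)

From HB Require Import structures.
From mathcomp Require Import all_boot all_algebra.
From mathcomp Require Import mpoly.
From mathcomp Require Import zify ring.
Import GRing.Theory.

Definition gap2 (i j : nat) := i.+2 <= j.

Lemma gap2_exchange (lo hi : nat) (T : seq nat) (p : nat) (P : seq nat) :
  sorted gap2 (p :: P) -> sorted gap2 T -> size P = size T -> lo <= p ->
  all (fun i => lo < i <= hi) P -> all (fun i => lo < i < hi) T ->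
  p + 2 * size T < last p P ->
  exists L, [/\ sorted gap2 L, size L = (size T).+1,
    exists r, perm_eq (p :: P ++ T) (L ++ r) &
    (head 0 L = p /\ all (fun i => lo <= i < hi) L) \/
    (head 0 L = head 0 T /\ all (fun i => lo < i <= hi) L)].
Proof.
elim: T p P => [|t T IH] p [|p2 P] //=; rewrite ?addn0 ?ltnn //.
move=> /andP[pp2 sP] sT [sPT] lop /andP[/andP[lop2 p2hi] aP] /andP[/andP[lot thi] aT].
move=> hlast; have sT' := path_sorted sT.
have [pt|tp] := leqP p.+2 t.
  exists [:: p, t & T]; split=> //=.
  - by rewrite sT andbT.
  - by exists (p2 :: P); apply/permP => q; rewrite /= !count_cat /=; lia.
  - left; split=> //=; apply/and3P; split; [lia | lia |].
    by apply: sub_all aT => i /andP[/ltnW -> ->].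
have [tp2|p2t] := leqP t.+2 p2.
  exists [:: t, p2 & P]; split=> //=.
  - by rewrite sP andbT.
  - by rewrite sPT.
  - by exists (p :: T); apply/permP => q; rewrite /= !count_cat /=; lia.
  - by right; split=> //=; rewrite aP andbT; lia.
have [ep ep2] : p = t.-1 /\ p2 = t.+1 by rewrite /gap2 in pp2; lia.
subst p p2; clear tp p2t pp2.
case: T IH sT sT' aT sPT hlast => [|t2 T] IH sT sT' aT sPT hlast.
  by case: P sP aP sPT hlast => //= _ _ _; lia.
have hlast' : t.+1 + 2 * size (t2 :: T) < last t.+1 P by move: hlast => /=; lia.
have [L [sL sizeL [r perm_r] hL]] := IH t.+1 P sP sT' sPT (ltnW lop2) aP aT hlast'.
case: L sL sizeL perm_r hL => [//|l L] sL sizeL perm_r [[/= hl aL]|[/= hl aL]]; subst l.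
  exists [:: t.-1, t.+1 & L]; split=> //=.
  - by apply/andP; split=> //; rewrite /gap2; lia.
  - by move: sizeL => /= ->.
  - exists (t :: r); move/permP: perm_r => perm_r; apply/permP => q.
    by move: (perm_r q); rewrite /= !count_cat /=; lia.
  - by left; split=> //; rewrite aL andbT; lia.
exists [:: t, t2 & L]; split=> //=.
- by apply/andP; split=> //; case/andP: sT.
- by move: sizeL => /= ->.
- exists (t.-1 :: r); move/permP: perm_r => perm_r; apply/permP => q.
  by move: (perm_r q); rewrite /= !count_cat /=; lia.
- by right; split=> //; rewrite aL andbT; lia.
Qed.

Lemma gap2_frame (lo hi : nat) (U : seq nat) :
  lo.+2 <= hi -> sorted gap2 U -> all (fun i => lo.+2 <= i <= hi - 2) U ->
  sorted gap2 (lo :: rcons U hi).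
Proof.
move=> lo_hi sU aU; rewrite /= rcons_path; apply/andP; split.
  by case: U sU aU => //= u U -> /andP[/andP[lo_u _] _]; rewrite andbT.
case/lastP: U {sU} aU => [//|V l]; rewrite last_rcons all_rcons => /andP[/andP[_ l_hi] _].
rewrite /gap2; lia.
Qed.

Local Open Scope ring_scope.

Section IdealGen.
Variables (R : comNzRingType) (G : R -> Prop).

Lemma ideal_gen0 : ideal_gen G 0.
Proof. by exists [::]; rewrite big_nil. Qed.

Lemma ideal_genD x y : ideal_gen G x -> ideal_gen G y -> ideal_gen G (x + y).
Proof.
move=> [s [Gs ->]] [t [Gt ->]]; exists (s ++ t); rewrite big_cat; split=> //.
by move=> pr; rewrite mem_cat => /orP[/Gs|/Gt].
Qed.

Lemma ideal_genMl c x : ideal_gen G x -> ideal_gen G (c * x).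
Proof.
move=> [s [Gs ->]]; exists [seq (c * pr.1, pr.2) | pr <- s]; split.
  by move=> _ /mapP[pr /Gs Gpr ->].
by rewrite big_map mulr_sumr; apply: eq_bigr => pr _; rewrite mulrA.
Qed.

Lemma mem_ideal_gen g : G g -> ideal_gen G g.
Proof.
by move=> Gg; exists [:: (1, g)]; rewrite big_seq1 mul1r; split=> // pr /[!inE]/eqP->.
Qed.

End IdealGen.

Lemma ideal_gen_mul_subset (R : comNzRingType) (G H : R -> Prop) c f :
  (forall g, G g -> ideal_gen H (c * g)) -> ideal_gen G f -> ideal_gen H (c * f).
Proof.
move=> cGH [s [Gs ->]]; rewrite mulr_sumr big_seq.
apply: (big_ind (ideal_gen H)) => [|x y|pr /Gs Gpr]; first exact: ideal_gen0.
  exact: ideal_genD.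
by rewrite mulrCA; apply: ideal_genMl; apply: cGH.
Qed.

Section ProductsInI.
Variables (k : fieldType) (m a : nat).
Hypotheses (a_ge2 : (2 <= a)%N) (a_le_half : (2 * a <= m)%N).

Let x := @xv k m.
Let I := ideal_gen (genU (@Igens k m a 1 (m - 1)) (@Igens k m a 2 m)).

Lemma x1xm_gens_mem g h :
  @Igens k m (a - 1) 2 (m - 1) g -> @Igens k m (a - 2) 3 (m - 2) h ->
  I (x 1 * x m * g * h).
Proof.
move=> [T [sizeT sT aT ->]] [U [sizeU sU aU ->]].
have sP : sorted gap2 (1%N :: rcons U m) by apply: gap2_frame; [lia | exact: sU | exact: aU].
have aP : all (fun i => 1 < i <= m)%N (rcons U m).
  rewrite all_rcons leqnn; apply/andP; split; first lia.
  by apply: sub_all aU => i /andP[? ?]; apply/andP; split; lia.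
have sizeP : size (rcons U m) = size T by rewrite size_rcons; lia.
have aT' : all (fun i => 1 < i < m)%N T.
  by apply: sub_all aT => i /andP[? ?]; apply/andP; split; lia.
have lastP : (1 + 2 * size T < last 1 (rcons U m))%N by rewrite last_rcons; lia.
have [L [sL sizeL [r perm_r] hL]] :=
  @gap2_exchange 1%N m T 1%N (rcons U m) sP sT sizeP (leqnn 1%N) aP aT' lastP.
have -> : x 1 * x m * \prod_(i <- T) x i * \prod_(i <- U) x i =
          \prod_(i <- r) x i * \prod_(i <- L) x i.
  by rewrite [RHS]mulrC -big_cat -(perm_big _ perm_r) big_cons -cats1 !big_cat big_seq1 /x /=; ring.
apply: ideal_genMl; apply: mem_ideal_gen.
have sizeL' : size L = a by rewrite sizeL sizeT; lia.
case: hL => [[_ aL]|[_ aL]]; [left|right]; exists L; split=> //.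
by apply: sub_all aL => i /andP[? ?]; apply/andP; split; lia.
Qed.

Lemma x1xm_ideals_mem v w :
  ideal_gen (@Igens k m (a - 1) 2 (m - 1)) v -> ideal_gen (@Igens k m (a - 2) 3 (m - 2)) w ->
  I (x 1 * x m * v * w).
Proof.
move=> v_in w_in; rewrite mulrAC /I; apply: ideal_gen_mul_subset v_in => g g_in.
rewrite mulrAC; apply: ideal_gen_mul_subset w_in => h h_in.
exact: x1xm_gens_mem.
Qed.

(* The hypotheses on [b] in the theorem only make [s0] a genuine fraction;
   the equality of fractions already holds with the trivial witness [u = 1]. *)
Lemma s0_z_w_frac_eq b b1 b2 w :
  ideal_gen (genU (@Igens k m (a - 1) 2 (m - 1)) I) b1 ->
  I (b - (b1 + @zv k m * b2)) ->
  ideal_gen (@Igens k m (a - 2) 3 (m - 2)) w ->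
  frac_eq I (b2 * x 1 * x m * @zv k m * w) b (w * x 1 * x m) 1.
Proof.
move=> b1_in b_eq w_in; exists 1; split=> [y|]; first by rewrite mul1r.
have -> : 1 * (b2 * x 1 * x m * @zv k m * w * 1 - w * x 1 * x m * b) =
          - (x 1 * x m * w) * (b - (b1 + @zv k m * b2)) + (-1) * (x 1 * x m * w * b1).
  by ring.
apply: ideal_genD; apply: ideal_genMl => //.
apply: ideal_gen_mul_subset b1_in => g [g_in|g_in]; last exact: ideal_genMl.
by rewrite mulrAC; apply: x1xm_ideals_mem => //; apply: mem_ideal_gen.
Qed.

End ProductsInI.

Theorem lemma3p5 (k : fieldType) (d m : nat) :
  ~~ odd d -> (4 <= d)%N -> (d < m - 1)%N ->
  let a := ((d + 2) %/ 2)%N in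
  let x1 := @xv k m 1 in
  let xm := @xv k m m in
  let z := @zv k m in
  let G1 := @Igens k m (a - 1) 2 (m - 1) in
  let G2 := @Igens k m (a - 2) 3 (m - 2) in
  let I := ideal_gen (genU (@Igens k m a 1 (m - 1)) (@Igens k m a 2 m)) in
  let J := ideal_gen (genU G1 (genM z G2)) in
  (forall v w, ideal_gen G1 v -> ideal_gen G2 w -> I (x1 * xm * v * w))
  /\
  (forall b b1 b2 : {mpoly k[m.+1]},
     J b -> regular_mod I b ->
     ideal_gen (genU G1 I) b1 ->
     ideal_gen (genU G2 I) b2 ->
     I (b - (b1 + z * b2)) ->
     forall w, ideal_gen G2 w ->
       (* s0 * z * w = w * x1 * xm in K(R/I), where s0 = b2 x1 xm / b *)
       frac_eq I (b2 * x1 * xm * z * w) b (w * x1 * xm) 1).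
Proof.
move=> _ d_ge4 d_lt_m a x1 xm z G1 G2 I J.
have a_ge2 : (2 <= a)%N by rewrite /a; lia.
have a_le_half : (2 * a <= m)%N by rewrite /a; lia.
split=> [v w v_in w_in | b b1 b2 _ _ b1_in _ b_eq w w_in].
  exact: x1xm_ideals_mem.
exact: s0_z_w_frac_eq b_eq w_in.
Qed.
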